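(* Assume the reduced model family is $(\varepsilon,\mu)$-admissible for some $\varepsilon>0$, $\mu\ge1$. Let $u\in V$ with $\operatorname{dist}(u,\mathcal M)\le\varepsilon_{model}$ and $w=P_Wu+\eta$, where $\eta\in W$ and $\|\eta\|\le\varepsilon_{noise}$. Let $u^*=u^*(w)$ be the estimator obtained by surrogate model selection with the surrogate $\mathcal S(v,\mathcal M)=\min_{y\in Y}\mathcal R(v,y)$. Define the alternating minimization sequence as follows: - set $u^0=u^*$ and choose $y^0\in\operatorname{argmin}_{y\in Y}\mathcal R(u^*,y)$; - for $k\ge0$, choose $y^{k+1}\in\operatorname{argmin}_{y\in Y}\mathcal R(u^k,y)$; - for $k\ge0$, let $u^{k+1}$ be the minimizer of $v\mapsto\mathcal R(v,y^{k+1})$ over $v\in w+W^\perp$. Then $\mathcal R(u^{k+1},y^{k+1})\le\mathcal R(u^k,y^k)$ for all $k\ge0$. Moreover, for every $k\ge0$, $$\|u-u^k\|\le\delta_{\kappa\rho}+\varepsilon_{noise},\qquad\rho:=\mu(\varepsilon+\varepsilon_{noise})+(\mu+1)\varepsilon_{model},\quad\kappa=R/r.$$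
   Context: Let $V$ and $Z$ be real Hilbert spaces, with $\|\cdot\|$ the norm of $V$ and $Z'$ the dual of $Z$. Let $Y\subset\mathbb R^d$ be compact. For $y\in Y$ let $A(y):V\to Z'$ be a bounded linear isomorphism and $f(y)\in Z'$, with $y\mapsto A(y)$ and $y\mapsto f(y)$ continuous. Assume there are constants $0<r\le R$ such that $\|A(y)\|_{V\to Z'}\le R$ and $\|A(y)^{-1}\|_{Z'\to V}\le r^{-1}$ for all $y\in Y$. Let $u(y)=A(y)^{-1}f(y)$ and $\mathcal M=\{u(y):y\in Y\}$. Define the residual $\mathcal R(v,y)=\|A(y)v-f(y)\|_{Z'}$. Let $W\subset V$ be a subspace of finite dimension $m$, let $P_W$ be the orthogonal projection onto $W$, and let $W^\perp$ be its orthogonal complement. For $w\in W$ put $V_w=w+W^\perp$. For $\sigma\ge0$ define $\mathcal M_\sigma=\{v:\operatorname{dist}(v,\mathcal M)\le\sigma\}$ and $\delta_\sigma=\sup\{\|u-v\|:u,v\in\mathcal M_\sigma,u-v\in W^\perp\}$. For a finite-dimensional subspace $E$ let $\mu(E,W)=\sup_{v\in E\setminus\{0\}}\|v\|/\|P_Wv\|$, with $\mu(\{0\},W)=1$. A reduced model family consists of: - sets $\mathcal M_1,\dots,\mathcal M_K$ with $\mathcal M=\bigcup_k\mathcal M_k$; - affine spaces $V_k=\bar u_k+\bar V_k$ with $\dim\bar V_k\le m$; - numbers $\varepsilon_k\ge\sup_{u\in\mathcal M_k}\operatorname{dist}(u,V_k)$; - constants $\mu_k=\mu(\bar V_k,W)$.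 The family is $(\varepsilon,\mu)$-admissible if $\varepsilon_k\le\varepsilon$ and $\mu_k\le\mu$ for all $k$. PBDW estimators: $u_k^*(w)=\operatorname{argmin}\{\operatorname{dist}(v,V_k):v\in V_w\}$. Surrogate model selection picks $k^*(w)$ as a minimizer of $k\mapsto\mathcal S(u_k^*(w),\mathcal M)$ and sets $u^*(w)=u^*_{k^*(w)}(w)$. *)

From mathcomp Require Import all_boot all_order all_algebra all_classical all_reals all_analysis.
Import numFieldNormedType.Exports.
Import Order.TTheory GRing.Theory Num.Theory.
Set Implicit Arguments. Unset Strict Implicit. Unset Printing Implicit Defensive.
Local Open Scope classical_set_scope.
Local Open Scope ring_scope.

Section Defs.
Variables (R : realType) (V : normedModType R).

(* ip is an inner product inducing the norm of V (so a complete V is a real Hilbert space) *)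
Definition is_inner_product (ip : V -> V -> R) : Prop :=
  [/\ (forall x y, ip x y = ip y x),
      (forall (a : R) x y z, ip (a *: x + y) z = a * ip x z + ip y z) &
      (forall x, `|x| = Num.sqrt (ip x x))].

Definition fspan (n : nat) (b : 'I_n -> V) : set V :=
  [set v | exists c : 'I_n -> R, v = \sum_(i < n) c i *: b i].

Definition lin_indep (n : nat) (b : 'I_n -> V) : Prop :=
  forall c : 'I_n -> R, \sum_(i < n) c i *: b i = 0 -> forall i, c i = 0.

Definition orth_compl (ip : V -> V -> R) (W : set V) : set V :=
  [set v | forall x, W x -> ip v x = 0].

Definition is_orth_proj (ip : V -> V -> R) (W : set V) (P : V -> V) : Prop :=
  forall v, W (P v) /\ (forall x, W x -> ip (v - P v) x = 0).

Definition aff_sp (ubar : V) (E : set V) : set V := [set ubar + x | x in E].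

(* distance to a set (extended real: +oo for the empty set) *)
Definition dist_to (v : V) (S : set V) : \bar R :=
  ereal_inf [set (`|v - s|)%:E | s in S].

Definition Msig (M : set V) (sigma : R) : set V :=
  [set v | (dist_to v M <= sigma%:E)%E].

Definition delta_sig (ip : V -> V -> R) (W : set V) (M : set V) (sigma : R) : \bar R :=
  ereal_sup [set e | exists x y, [/\ Msig M sigma x, Msig M sigma y,
                                     orth_compl ip W (x - y) & e = (`|x - y|)%:E]].

Definition mu_ratio (P : V -> V) (E : set V) : \bar R :=
  if `[< E `<=` [set 0] >] then 1%E
  else ereal_sup [set (if P v == 0 then +oo%E else (`|v| / `|P v|)%:E) | v in E `\ 0].
End Defs.

Section Model.
Variables (R : realType) (V Zd : normedModType R) (d : nat).

(* residual R(v,y) = |A(y)v - f(y)|_{Z'} *)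
Definition residual (A : 'rV[R]_d -> V -> Zd) (f : 'rV[R]_d -> Zd) (v : V) (y : 'rV[R]_d) : R :=
  `|A y v - f y|.

(* solution manifold M = { A(y)^{-1} f(y) : y in Y } *)
Definition solset (Y : set 'rV[R]_d) (A : 'rV[R]_d -> V -> Zd) (f : 'rV[R]_d -> Zd) : set V :=
  [set v | exists2 y, Y y & A y v = f y].

Definition surrogate (Y : set 'rV[R]_d) (A : 'rV[R]_d -> V -> Zd) (f : 'rV[R]_d -> Zd) (v : V) : \bar R :=
  ereal_inf [set (residual A f v y)%:E | y in Y].
End Model.

From mathcomp Require Import all_boot all_order all_algebra all_classical all_reals all_analysis.
From mathcomp Require Import ring lra.
Import numFieldNormedType.Exports.
Import Order.TTheory GRing.Theory Num.Theory.
Local Open Scope classical_set_scope.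
Local Open Scope ring_scope.
Set Implicit Arguments. Unset Strict Implicit.

(* For an affine model c0 + E with
      mu(E, W) <= mu and data w in W, the minimizer u* of dist(., c0 + E) over
      w + W^perp is the explicit point c0 + es + (w - P c0 - P es), where P es is
      the best fit of w - P c0 in P(E).  Consequently
      |u* - ub| <= mu (|a - ub| + |w - P ub|) for every a in c0 + E and every ub.
   2. The selected estimator (section Selection).  Taking a solution ub near u,
      a model M_j containing it and a in V_j near ub, step 1 yields
      |u*_j - ub| <= rho; surrogate selection and R(v, y) <= R |v - u(y)| then
      give R(u^0, y^0) <= R rho.
   3. The theorem.  Alternating minimization does not increase the residual, so
      R(u^k, y^k) <= R rho and dist(u^k, M) <= kappa rho; also u + eta lies in
      M_{kappa rho} and u + eta - u^k lies in W^perp, whence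
      |u + eta - u^k| <= delta_{kappa rho}. *)

Section InnerProduct.
Variables (R : realType) (V : normedModType R) (ip : V -> V -> R).
Hypothesis hip : is_inner_product ip.

Lemma ipC x y : ip x y = ip y x. Proof. by case: hip. Qed.

Lemma ipDl x y z : ip (x + y) z = ip x z + ip y z.
Proof. by case: hip => _ h _; have := h 1 x y z; rewrite scale1r mul1r. Qed.

Lemma ip0l z : ip 0 z = 0.
Proof. have := ipDl 0 0 z; rewrite addr0 => h; lra. Qed.

Lemma ipZl a x z : ip (a *: x) z = a * ip x z.
Proof. by case: hip => _ h _; have := h a x 0 z; rewrite addr0 ip0l addr0. Qed.

Lemma ipBl x y z : ip (x - y) z = ip x z - ip y z.
Proof. by rewrite ipDl -scaleN1r ipZl mulN1r. Qed.

Lemma ipDr x y z : ip z (x + y) = ip z x + ip z y.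
Proof. by rewrite ipC ipDl ipC [ip y z]ipC. Qed.

Lemma ip0r z : ip z 0 = 0.
Proof. by rewrite ipC ip0l. Qed.

Lemma ipZr a x z : ip z (a *: x) = a * ip z x.
Proof. by rewrite ipC ipZl ipC. Qed.

Lemma ip_sumr n (F : 'I_n -> V) z : ip z (\sum_(i < n) F i) = \sum_(i < n) ip z (F i).
Proof. by rewrite (big_morph (ip z) (fun x y => ipDr x y z) (ip0r z)). Qed.

Lemma ip_ge0 x : 0 <= ip x x.
Proof.
case: (hip) => _ _ h; case: (leP 0 (ip x x)) => // hlt.
have := h x; rewrite ltr0_sqrtr // => /normr0_eq0 x0.
by move: hlt; rewrite x0 ip0l ltxx.
Qed.

Lemma sqr_norm_ip x : `|x| ^+ 2 = ip x x.
Proof. by case: (hip) => _ _ h; rewrite h sqr_sqrtr // ip_ge0. Qed.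

Lemma ip_self_eq0 x : ip x x = 0 -> x = 0.
Proof.
move=> h; apply: normr0_eq0; have := sqr_norm_ip x.
by rewrite h => /eqP; rewrite sqrf_eq0 => /eqP.
Qed.

Lemma pythagoras x y : ip x y = 0 -> `|x + y| ^+ 2 = `|x| ^+ 2 + `|y| ^+ 2.
Proof. by move=> h; rewrite !sqr_norm_ip ipDl !ipDr h [ip y x]ipC h addr0 add0r. Qed.

Lemma ip_comb_eq0 n (c : 'I_n -> R) (g : 'I_n -> V) x :
  (forall i, ip x (g i) = 0) -> ip x (\sum_(i < n) c i *: g i) = 0.
Proof. by move=> h; rewrite ip_sumr big1 // => i _; rewrite ipZr h mulr0. Qed.

(* Orthogonal projection onto the span of finitely many vectors exists:
   a Gram–Schmidt induction on the number of vectors.  This replaces any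
   appeal to completeness in the finite-dimensional best-fit problem. *)
Lemma span_projection_exists n (g : nat -> V) t : exists c : nat -> R,
  forall i : 'I_n, ip (t - \sum_(k < n) c k *: g k) (g i) = 0.
Proof.
elim: n t => [|n IH] t; first by exists (fun _ => 0) => -[].
have [c' hc'] := IH t; have [d hd] := IH (g n).
set gn := g n - \sum_(k < n) d k *: g k.
set x0 := t - \sum_(k < n) c' k *: g k.
set lam := if ip gn gn == 0 then 0 else ip x0 gn / ip gn gn.
exists (fun k : nat => if k == n then lam else c' k - lam * d k).
have -> : \sum_(k < n.+1) (if (k : nat) == n then lam else c' k - lam * d k) *: g k
   = \sum_(k < n) c' k *: g k + lam *: gn.
  rewrite big_ord_recr /= eqxx.
  rewrite (eq_bigr (fun k : 'I_n => c' k *: g k - lam *: (d k *: g k))); last first.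
    by move=> k _; rewrite /= ltn_eqF // scalerBl scalerA.
  by rewrite sumrB /gn scalerBr -scaler_sumr addrAC addrA.
have -> : t - (\sum_(k < n) c' k *: g k + lam *: gn) = x0 - lam *: gn.
  by rewrite /x0 opprD addrA.
have old_orth : forall i : 'I_n, ip (x0 - lam *: gn) (g i) = 0.
  by move=> i; rewrite ipBl ipZl hc' hd mulr0 subr0.
move=> i; case: (ltnP i n) => hi; first exact: (old_orth (Ordinal hi)).
have -> : (i : nat) = n by apply/eqP; rewrite eqn_leq hi -ltnS ltn_ord.
have -> : g n = gn + \sum_(k < n) d k *: g k by rewrite /gn subrK.
rewrite ipDr ip_comb_eq0 ?addr0; last by move=> k; rewrite old_orth.
rewrite ipBl ipZl /lam; case: eqP => h.
  by rewrite (ip_self_eq0 h) ip0r mul0r subr0.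
by rewrite divfK ?subrr //; apply/eqP.
Qed.

End InnerProduct.

Section Distance.
Variables (R : realType) (V : normedModType R).
Implicit Types (S : set V) (v s : V).

Lemma dist_le S v s : S s -> (dist_to v S <= (`|v - s|)%:E)%E.
Proof. by move=> Ss; apply: ereal_inf_lbound; exists s. Qed.

Lemma dist_ge0 S v : (0 <= dist_to v S)%E.
Proof. by apply: le_ereal_inf_tmp => _ [s _ <-]; rewrite lee_fin. Qed.

Lemma dist_approx S v x e : (dist_to v S <= x%:E)%E -> 0 < e ->
  exists2 s, S s & `|v - s| < x + e.
Proof.
move=> h e0; have : (dist_to v S < (x + e)%:E)%E.
  by apply: (le_lt_trans h); rewrite lte_fin ltrDl.
by move/ereal_inf_lt => [_ [s Ss <-]]; rewrite lte_fin => hs; exists s.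
Qed.

Lemma dist_le_approx S v x : (forall e, 0 < e -> exists2 s, S s & `|v - s| <= x + e) ->
  (dist_to v S <= x%:E)%E.
Proof.
move=> h; case E: (dist_to v S) => [r| |].
- rewrite lee_fin; apply/ler_addgt0Pr => e e0.
  have [s Ss hs] := h e e0; have := dist_le v Ss; rewrite E lee_fin => h1.
  exact: le_trans h1 hs.
- by have [s Ss _] := h 1 ltr01; have := dist_le v Ss; rewrite E.
- by rewrite leNye.
Qed.

Lemma dist_shift_le S v (e : V) x y : (dist_to v S <= x%:E)%E -> `|e| <= y ->
  (dist_to (v + e)%R S <= (x + y)%:E)%E.
Proof.
move=> hv he; apply: dist_le_approx => g g0.
have [s Ss hs] := dist_approx hv g0; exists s => //.
rewrite addrAC; apply: le_trans (ler_normD _ _) _; have := ltW hs; lra.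
Qed.

Lemma dist_approx_sqr S v g tau : (dist_to v S <= g%:E)%E -> 0 <= g -> 0 < tau ->
  exists2 s, S s & `|v - s| ^+ 2 <= g ^+ 2 + tau.
Proof.
move=> h g0 tau0; have k0 : 0 < 2 * g + 1 + tau by lra.
set e := tau / (2 * g + 1 + tau).
have e0 : 0 < e by apply: divr_gt0.
have ek : e * (2 * g + 1 + tau) = tau by rewrite /e divfK // gt_eqF.
have e1 : e <= 1 by rewrite /e ler_pdivrMr // mul1r; lra.
have [s Ss hs] := dist_approx h e0; exists s => //.
have := normr_ge0 (v - s); nra.
Qed.

End Distance.

Lemma delta_sig_ub (R : realType) (V : normedModType R) (ip : V -> V -> R)
    (W M : set V) (sigma : R) (x y : V) :
  Msig M sigma x -> Msig M sigma y -> orth_compl ip W (x - y) ->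
  ((`|x - y|)%:E <= delta_sig ip W M sigma)%E.
Proof. by move=> Mx My xy; apply: ereal_sup_ubound; exists x, y. Qed.

Section Span.
Variables (R : realType) (V : normedModType R) (n : nat) (b : 'I_n -> V).

Lemma fspan_lin a x y : fspan b x -> fspan b y -> fspan b (a *: x + y).
Proof.
move=> [c ->] [d ->]; exists (fun i => a * c i + d i).
rewrite scaler_sumr -big_split /=; apply: eq_bigr => i _.
by rewrite scalerDl scalerA.
Qed.

Lemma fspan0 : fspan b 0.
Proof. by exists (fun _ => 0); rewrite big1 // => i _; rewrite scale0r. Qed.

Lemma fspanD x y : fspan b x -> fspan b y -> fspan b (x + y).
Proof. by move=> hx hy; have := fspan_lin 1 hx hy; rewrite scale1r. Qed.

Lemma fspanB x y : fspan b x -> fspan b y -> fspan b (x - y).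
Proof.
move=> hx hy; apply: fspanD => //; rewrite -scaleN1r.
by have := fspan_lin (-1) hy fspan0; rewrite addr0.
Qed.

End Span.


Section OrthProjection.
Variables (R : realType) (V : normedModType R) (ip : V -> V -> R).
Hypothesis hip : is_inner_product ip.
Variables (m : nat) (bW : 'I_m -> V) (P : V -> V).
Hypothesis hP : is_orth_proj ip (fspan bW) P.
Local Notation W := (fspan bW).

Lemma proj_in v : W (P v). Proof. by case: (hP v). Qed.

Lemma proj_orth v x : W x -> ip (v - P v) x = 0. Proof. by case: (hP v) => _; apply. Qed.

Lemma proj_uniq v y : W y -> (forall x, W x -> ip (v - y) x = 0) -> P v = y.
Proof.
move=> Wy h; apply/eqP; rewrite -subr_eq0; apply/eqP; apply: (ip_self_eq0 hip).
have Wd : W (P v - y) by apply: fspanB => //; apply: proj_in.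
have e : P v - y = (v - y) - (v - P v) by rewrite opprB [RHS]addrC addrA subrK.
by rewrite {1}e (ipBl hip) h // proj_orth // subrr.
Qed.

Lemma proj_id w : W w -> P w = w.
Proof. by move=> Ww; apply: proj_uniq => // x _; rewrite subrr (ip0l hip). Qed.

Lemma proj_lin a x y : P (a *: x + y) = a *: P x + P y.
Proof.
apply: proj_uniq; first by apply: fspan_lin; apply: proj_in.
move=> z Wz; have -> : a *: x + y - (a *: P x + P y) = a *: (x - P x) + (y - P y).
  by rewrite scalerBr opprD addrACA.
by rewrite (ipDl hip) (ipZl hip) !proj_orth // mulr0 addr0.
Qed.

Lemma proj0 : P 0 = 0. Proof. by rewrite proj_id //; apply: fspan0. Qed.

Lemma projD x y : P (x + y) = P x + P y.
Proof. by have := proj_lin 1 x y; rewrite !scale1r. Qed.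

Lemma projZ a x : P (a *: x) = a *: P x.
Proof. by have := proj_lin a x 0; rewrite !addr0 proj0 addr0. Qed.

Lemma projB x y : P (x - y) = P x - P y.
Proof. by rewrite projD -scaleN1r projZ scaleN1r. Qed.

Lemma proj_sum n (F : 'I_n -> V) : P (\sum_(i < n) F i) = \sum_(i < n) P (F i).
Proof. by rewrite (big_morph P projD proj0). Qed.

Definition coproj x := x - P x.
Local Notation Q := coproj.

Lemma coprojD x y : Q (x + y) = Q x + Q y.
Proof. by rewrite /Q projD opprD addrACA. Qed.

Lemma coprojB x y : Q (x - y) = Q x - Q y.
Proof. by rewrite /Q projB !opprB addrACA [in RHS]addrACA (addrC (- P x)). Qed.

Lemma coproj_W x : W x -> Q x = 0.
Proof. by move=> Wx; rewrite /Q proj_id // subrr. Qed.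

Lemma coproj_ker x : P x = 0 -> Q x = x.
Proof. by move=> h; rewrite /Q h subr0. Qed.

Lemma pythagoras_proj x : `|x| ^+ 2 = `|P x| ^+ 2 + `|Q x| ^+ 2.
Proof.
have e : x = P x + Q x by rewrite addrC subrK.
by rewrite {1}e (pythagoras hip) // (ipC hip) proj_orth //; apply: proj_in.
Qed.

Lemma norm_proj_le x : `|P x| <= `|x|.
Proof.
have := pythagoras_proj x; have := sqr_ge0 `|Q x|.
have := normr_ge0 (P x); have := normr_ge0 x; nra.
Qed.

Lemma norm_coproj_le x : `|Q x| <= `|x|.
Proof.
have := pythagoras_proj x; have := sqr_ge0 `|P x|.
have := normr_ge0 (Q x); have := normr_ge0 x; nra.
Qed.

Lemma proj_ker_orth x : P x = 0 -> orth_compl ip W x.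
Proof. by move=> h y Wy; rewrite -(coproj_ker h); apply: proj_orth. Qed.

Lemma aff_orth_fiber w v : W w -> aff_sp w (orth_compl ip W) v <-> P v = w.
Proof.
move=> Ww; split.
  move=> [z hz <-]; rewrite projD proj_id //; suff -> : P z = 0 by rewrite addr0.
  by apply: proj_uniq; [apply: fspan0 | move=> x Wx; rewrite subr0; apply: hz].
move=> hv; exists (v - w); last by rewrite addrC subrK.
by move=> x Wx; rewrite -hv proj_orth.
Qed.

Lemma fiber_diff_orth x w v : W w -> P x = w ->
  aff_sp w (orth_compl ip W) v -> orth_compl ip W (x - v).
Proof.
move=> Ww Px /(aff_orth_fiber _ Ww) Pv; apply: proj_ker_orth.
by rewrite projB Px Pv subrr.
Qed.

Lemma mu_ratio_bound (E : set V) mu e : (mu_ratio P E <= mu%:E)%E -> 1 <= mu -> E e ->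
  `|e| <= mu * `|P e|.
Proof.
move=> h hmu Ee; case: (eqVneq e 0) => [->|e0].
  by rewrite normr0 mulr_ge0 // (le_trans ler01 hmu).
move: h; rewrite /mu_ratio; case: asboolP => [sub|_] h.
  by move: e0; rewrite (sub e Ee) eqxx.
have : ((if P e == 0%R then +oo else (`|e| / `|P e|)%:E) <= mu%:E)%E.
  apply: le_trans h; apply: ereal_sup_ubound; exists e => //; split => //.
  by move=> /= e00; move: e0; rewrite e00 eqxx.
case: eqP => hPe //.
by rewrite lee_fin ler_pdivrMr ?normr_gt0 //; apply/eqP.
Qed.

End OrthProjection.


(* The scalar inequality closing the PBDW error analysis: with
   s = sqrt(mu^2 - 1), Y <= s (pi + al) and s al + be <= mu ep by
   Cauchy–Schwarz, and then pi^2 + (s pi + mu ep)^2 <= mu^2 (ep + pi)^2. *)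
Lemma pbdw_scalar_bound (R : realType) (mu X Y pi al be ep : R) :
  1 <= mu -> 0 <= X -> 0 <= Y -> 0 <= pi -> 0 <= al -> 0 <= be -> 0 <= ep ->
  X ^+ 2 <= pi ^+ 2 + (Y + be) ^+ 2 -> Y ^+ 2 <= (mu ^+ 2 - 1) * (pi + al) ^+ 2 ->
  al ^+ 2 + be ^+ 2 <= ep ^+ 2 -> X <= mu * (ep + pi).
Proof.
move=> hmu hX hY hpi hal hbe hep hX2 hY2 hab.
have hm2 : 0 <= mu ^+ 2 - 1 by nra.
set s := Num.sqrt (mu ^+ 2 - 1).
have s2 : s ^+ 2 = mu ^+ 2 - 1 by rewrite sqr_sqrtr.
have s0 : 0 <= s by apply: sqrtr_ge0.
have smu : s <= mu by nra.
have hYs : Y <= s * (pi + al).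
  rewrite -s2 -exprMn in hY2.
  by rewrite -(ler_pXn2r (_ : 0 < 2)%N) ?nnegrE // mulr_ge0 // addr_ge0.
have hsab : s * al + be <= mu * ep.
  have : (s * al + be) ^+ 2 <= (mu * ep) ^+ 2.
    have : 0 <= (s * be - al) ^+ 2 by apply: sqr_ge0.
    have : (mu * ep) ^+ 2 = (s ^+ 2 + 1) * ep ^+ 2 by rewrite s2 exprMn; ring.
    nra.
  rewrite (ler_pXn2r (_ : 0 < 2)%N) ?nnegrE //; nra.
have hYbe : (Y + be) ^+ 2 <= (s * pi + mu * ep) ^+ 2.
  rewrite (ler_pXn2r (_ : 0 < 2)%N) ?nnegrE //; nra.
have gap : (mu * (ep + pi)) ^+ 2 - (pi ^+ 2 + (s * pi + mu * ep) ^+ 2)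
           = 2 * mu * pi * ep * (mu - s).
  have -> : (mu * (ep + pi)) ^+ 2 - (pi ^+ 2 + (s * pi + mu * ep) ^+ 2)
            = (mu ^+ 2 - 1 - s ^+ 2) * pi ^+ 2 + 2 * mu * pi * ep * (mu - s) by ring.
  by rewrite s2 subrr mul0r add0r.
have gap0 : 0 <= 2 * mu * pi * ep * (mu - s).
  by rewrite !mulr_ge0 //; lra.
have : X ^+ 2 <= (mu * (ep + pi)) ^+ 2 by lra.
rewrite (ler_pXn2r (_ : 0 < 2)%N) ?nnegrE //; nra.
Qed.

Section PBDW.
Variables (R : realType) (V : normedModType R) (ip : V -> V -> R).
Hypothesis hip : is_inner_product ip.
Variables (m : nat) (bW : 'I_m -> V) (P : V -> V).
Hypothesis hP : is_orth_proj ip (fspan bW) P.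
Local Notation W := (fspan bW).
Local Notation Q := (coproj P).
Variables (n : nat) (b : 'I_n -> V) (mu : R) (c0 w : V).
Hypotheses (hmu : 1 <= mu) (hstab : forall e, fspan b e -> `|e| <= mu * `|P e|) (Ww : W w).
Local Notation E := (fspan b).
Local Notation VA := (aff_sp c0 (fspan b)).
Local Notation Vw := (aff_sp w (orth_compl ip (fspan bW))).
Local Notation t := (w - P c0).

Lemma best_fit_exists : exists2 es, E es & forall e, E e -> ip (t - P es) (P e) = 0.
Proof.
pose gb k := oapp b 0 (insub k).
have gbE i : gb (nat_of_ord i) = b i by rewrite /gb valK.
have [c hc] := span_projection_exists hip n (fun k => P (gb k)) t.
have Pcomb (d : 'I_n -> R) :
    P (\sum_(k < n) d k *: b k) = \sum_(k < n) d k *: P (gb k).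
  by rewrite (proj_sum hip hP); apply: eq_bigr => k _; rewrite (projZ hip hP) gbE.
exists (\sum_(k < n) c k *: b k); first by exists (fun k => c k).
move=> e [d ->]; rewrite (Pcomb d) (Pcomb (fun k => c k)).
by apply: (ip_comb_eq0 hip) => i; apply: hc.
Qed.

Section Candidate.
Variable es : V.
Hypotheses (Ees : E es) (hes : forall e, E e -> ip (t - P es) (P e) = 0).
Local Notation s := (P es).
Local Notation xs := (c0 + es + (t - P es)).

Let Wts : W (t - s).
Proof. by apply: fspanB; [apply: fspanB => //|]; apply: (proj_in hP). Qed.

Lemma candidate_proj : P xs = w.
Proof.
rewrite (projD hip hP) (proj_id hip hP Wts) (projD hip hP).
by rewrite -(addrA w) -opprD [LHS]addrC subrK.
Qed.

(* Orthogonality of the fit: t - P e splits as (t - s) + (s - P e). *)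
Lemma candidate_fit_pythagoras e : E e ->
  `|t - P e| ^+ 2 = `|t - s| ^+ 2 + `|s - P e| ^+ 2.
Proof.
move=> Ee; have -> : t - P e = (t - s) + (s - P e) by rewrite addrA subrK.
rewrite (pythagoras hip) // -(projB hip hP); apply: hes.
exact: fspanB.
Qed.

Lemma candidate_sqr_dist v e : P v = w -> E e ->
  `|v - (c0 + e)| ^+ 2 = `|t - s| ^+ 2 + `|s - P e| ^+ 2 + `|Q (v - (c0 + e))| ^+ 2.
Proof.
move=> Pv Ee; rewrite (pythagoras_proj hip hP) (projB hip hP) (projD hip hP) Pv.
have -> : w - (P c0 + P e) = t - P e by rewrite opprD addrA.
by rewrite candidate_fit_pythagoras.
Qed.

(* A point us of w + W^perp within the optimal fit error of VA is arbitrarily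
   close to xs: approximate minimizers c0 + e have small fit defect and small
   W^perp-component, and us - xs is controlled by both. *)
Lemma near_candidate us tau : P us = w -> (dist_to us VA <= (`|t - s|)%:E)%E ->
  0 < tau -> `|us - xs| ^+ 2 <= 2 * (1 + mu ^+ 2) * tau.
Proof.
move=> Pus dist_us tau0; set D := `|us - xs|.
have PD0 : P (us - xs) = 0 by rewrite (projB hip hP) Pus candidate_proj subrr.
have [_ [e Ee <-] hz] := dist_approx_sqr dist_us (normr_ge0 _) tau0.
rewrite candidate_sqr_dist // in hz.
set A := `|s - P e| in hz; set B := `|Q (us - (c0 + e))| in hz.
have hA : A ^+ 2 <= tau by have := sqr_ge0 B; lra.
have hB : B ^+ 2 <= tau by have := sqr_ge0 A; lra.
have hD : D <= B + mu * A.
  rewrite /D -(coproj_ker PD0).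
  have -> : us - xs = ((us - (c0 + e)) + (e - es)) - (t - s).
    by rewrite [in LHS]opprD addrA; congr (_ - _); rewrite !opprD !addrA subrK.
  rewrite (coprojB hip hP) (coproj_W hip hP Wts) subr0.
  rewrite (coprojD hip hP); apply: (le_trans (ler_normD _ _)); apply: lerD => //.
  apply: le_trans (norm_coproj_le hip hP _) _; apply: le_trans (hstab (fspanB Ee Ees)) _.
  by rewrite (projB hip hP) distrC.
have A0 : 0 <= A by apply: normr_ge0.
have B0 : 0 <= B by apply: normr_ge0.
have D0 : 0 <= D by apply: normr_ge0.
have : D ^+ 2 <= (B + mu * A) ^+ 2.
  by rewrite (ler_pXn2r (_ : 0 < 2)%N) ?nnegrE //; nra.
have : 0 <= (B - mu * A) ^+ 2 by apply: sqr_ge0.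
nra.
Qed.

Lemma pbdw_estimator_eq us : Vw us ->
  (forall v, Vw v -> (dist_to us VA <= dist_to v VA)%E) -> us = xs.
Proof.
move=> hus husmin; have Pus : P us = w by apply/(aff_orth_fiber hip hP _ Ww).
have Vxs : Vw xs by apply/(aff_orth_fiber hip hP _ Ww); apply: candidate_proj.
have dist_us : (dist_to us VA <= (`|t - s|)%:E)%E.
  apply: le_trans (husmin _ Vxs) _; apply: le_trans (dist_le xs (_ : VA (c0 + es))) _.
    by exists es.
  by rewrite addrAC subrr add0r.
have D2 : `|us - xs| ^+ 2 <= 0.
  apply/ler_addgt0Pr => e e0; rewrite add0r.
  have k0 : 0 < 2 * (1 + mu ^+ 2) by have := sqr_ge0 mu; lra.
  have := near_candidate Pus dist_us (divr_gt0 e0 k0).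
  by rewrite mulrC divfK // gt_eqF.
apply/eqP; rewrite -subr_eq0; apply/eqP/normr0_eq0.
by apply/eqP; rewrite -sqrf_eq0 eq_le D2 sqr_ge0.
Qed.

(* The W^perp-component of the model defect es - ea is controlled by the
   stability of E and by the fit defect, which is at most |P(xs - a)|. *)
Lemma candidate_perp_defect ub ea : E ea ->
  `|Q (es - ea)| ^+ 2 <= (mu ^+ 2 - 1) * (`|w - P ub| + `|P (c0 + ea - ub)|) ^+ 2.
Proof.
move=> Eea; set p := w - P ub; set z := c0 + ea - ub.
have fit : `|s - P ea| <= `|p| + `|P z|.
  have h := candidate_fit_pythagoras Eea.
  have Pz : t - P ea = p - P z.
    by rewrite (projB hip hP) (projD hip hP) opprB addrA subrK opprD addrA.
  rewrite Pz in h; apply: le_trans (ler_normB _ _).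
  have := sqr_ge0 `|t - s|; have := normr_ge0 (s - P ea).
  have := normr_ge0 (p - P z); nra.
have Pd : P (es - ea) = s - P ea by rewrite (projB hip hP).
have h1 := pythagoras_proj hip hP (es - ea); rewrite Pd in h1.
have h2 : `|es - ea| <= mu * `|s - P ea| by rewrite -Pd; apply/hstab/fspanB.
have n1 := normr_ge0 (es - ea); have n2 := normr_ge0 (s - P ea).
have n3 := normr_ge0 p; have n4 := normr_ge0 (P z).
have h3 : `|es - ea| ^+ 2 <= mu ^+ 2 * `|s - P ea| ^+ 2.
  rewrite -exprMn (ler_pXn2r (_ : 0 < 2)%N) ?nnegrE //; nra.
have h4 : `|s - P ea| ^+ 2 <= (`|p| + `|P z|) ^+ 2.
  by rewrite (ler_pXn2r (_ : 0 < 2)%N) ?nnegrE //; lra.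
have mu2 : 0 <= mu ^+ 2 - 1 by rewrite subr_ge0 exprn_ege1.
nra.
Qed.

(* Error bound for the candidate: its W-component error is |w - P ub|, and the
   W^perp-error is controlled by the stability of E (hence the mu). *)
Lemma candidate_error ub a : VA a -> `|xs - ub| <= mu * (`|a - ub| + `|w - P ub|).
Proof.
case=> ea Eea <-; set z := c0 + ea - ub; set p := w - P ub.
have Pxu : P (xs - ub) = p by rewrite (projB hip hP) candidate_proj.
have Qxu : Q (xs - ub) = Q (es - ea) + Q z.
  have -> : xs - ub = (es - ea) + z + (t - s).
    rewrite addrAC; congr (_ + _).
    by rewrite addrA (addrC c0 ea) addrA subrK (addrC c0).
  by rewrite (coprojD hip hP _ (t - s)) (coproj_W hip hP Wts) addr0 (coprojD hip hP).
set Y := `|Q (es - ea)|; set al := `|P z|; set be := `|Q z|.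
have hY : Y ^+ 2 <= (mu ^+ 2 - 1) * (`|p| + al) ^+ 2 by apply: candidate_perp_defect.
have hX : `|xs - ub| ^+ 2 <= `|p| ^+ 2 + (Y + be) ^+ 2.
  rewrite (pythagoras_proj hip hP) Pxu Qxu lerD2l.
  rewrite (ler_pXn2r (_ : 0 < 2)%N) ?nnegrE ?addr_ge0 ?normr_ge0 //.
  exact: ler_normD.
have hab : al ^+ 2 + be ^+ 2 <= `|z| ^+ 2 by rewrite (pythagoras_proj hip hP).
by apply: (pbdw_scalar_bound hmu _ _ _ _ _ _ hX hY hab); apply: normr_ge0.
Qed.

End Candidate.

Lemma pbdw_error_bound us ub a : Vw us ->
  (forall v, Vw v -> (dist_to us VA <= dist_to v VA)%E) -> VA a ->
  `|us - ub| <= mu * (`|a - ub| + `|w - P ub|).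
Proof.
move=> hus husmin VAa; have [es Ees hes] := best_fit_exists.
by rewrite (pbdw_estimator_eq Ees hes hus husmin); apply: candidate_error.
Qed.
End PBDW.


Section Residual.
Variables (R : realType) (V Zd : normedModType R) (d : nat).
Variables (A : 'rV[R]_d -> V -> Zd) (f : 'rV[R]_d -> Zd) (y : 'rV[R]_d).
Hypothesis hAlin : forall (a : R) (x z : V), A y (a *: x + z) = a *: A y x + A y z.

Lemma operator_linB x z : A y (x - z) = A y x - A y z.
Proof. by have := hAlin (-1) z x; rewrite !scaleN1r addrC => ->; rewrite addrC. Qed.

Lemma residual_le_error (Rc : R) ub v : (forall v, `|A y v| <= Rc * `|v|) ->
  A y ub = f y -> residual A f v y <= Rc * `|v - ub|.
Proof. by move=> hAbd Aub; rewrite /residual -Aub -operator_linB; apply: hAbd. Qed.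

Lemma dist_solset_le_residual (Y : set 'rV[R]_d) (r : R) v : Y y ->
  (exists B : Zd -> V, [/\ cancel (A y) B, cancel B (A y) & forall z, `|B z| <= r^-1 * `|z|]) ->
  (dist_to v (solset Y A f) <= (r^-1 * residual A f v y)%:E)%E.
Proof.
move=> Yy [B [AB BA hB]].
have Bsub x z : B (x - z) = B x - B z by apply: (can_inj AB); rewrite operator_linB !BA.
have Msol : solset Y A f (B (f y)) by exists y => //; rewrite BA.
apply: le_trans (dist_le _ Msol) _; rewrite lee_fin.
by rewrite -{1}(AB v) -Bsub; apply: hB.
Qed.

End Residual.

Lemma alternating_min_nonincreasing (R : realType) (T U : Type) (J : T -> U -> R)
    (C : set T) (Y : set U) (us : nat -> T) (ys : nat -> U) :
  (forall k, C (us k)) -> (forall k, Y (ys k)) ->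
  (forall k y, Y y -> J (us k) (ys k.+1) <= J (us k) y) ->
  (forall k v, C v -> J (us k.+1) (ys k.+1) <= J v (ys k.+1)) ->
  forall k, J (us k.+1) (ys k.+1) <= J (us k) (ys k).
Proof.
move=> Cus Yys ystep ustep k.
exact: le_trans (ustep k _ (Cus k)) (ystep k _ (Yys k)).
Qed.

Lemma surrogate_selection_le (R : realType) (V Zd : normedModType R) (d : nat)
    (Y : set 'rV[R]_d) (A : 'rV[R]_d -> V -> Zd) (f : 'rV[R]_d -> Zd)
    (I : Type) (ustar : I -> V) (kstar : I) (y0 : 'rV[R]_d) :
  (forall j, (surrogate Y A f (ustar kstar) <= surrogate Y A f (ustar j))%E) ->
  (forall y, Y y -> residual A f (ustar kstar) y0 <= residual A f (ustar kstar) y) ->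
  forall j y, Y y -> residual A f (ustar kstar) y0 <= residual A f (ustar j) y.
Proof.
move=> hkstar hy0 j y Yy; rewrite -lee_fin.
apply: (@le_trans _ _ (surrogate Y A f (ustar kstar))).
  by apply: le_ereal_inf_tmp => _ [y' Yy' <-]; rewrite lee_fin; apply: hy0.
by apply: le_trans (hkstar j) _; apply: ereal_inf_lbound; exists y.
Qed.

Section Selection.
Variables (R : realType) (V Zd : normedModType R) (ip : V -> V -> R).
Hypothesis hip : is_inner_product ip.
Variables (d : nat) (Y : set 'rV[R]_d) (A : 'rV[R]_d -> V -> Zd) (f : 'rV[R]_d -> Zd) (Rc : R).
Hypotheses (hRc : 0 < Rc)
  (hAlin : forall y, Y y -> forall (a : R) (x z : V), A y (a *: x + z) = a *: A y x + A y z)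
  (hAbd : forall y, Y y -> forall v, `|A y v| <= Rc * `|v|).
Variables (m : nat) (bW : 'I_m -> V) (P : V -> V).
Hypothesis hP : is_orth_proj ip (fspan bW) P.
Variables (K : nat) (Mk : 'I_K -> set V) (ubar : 'I_K -> V) (nk : 'I_K -> nat)
  (bk : forall k : 'I_K, 'I_(nk k) -> V) (epsk : 'I_K -> R) (eps mu : R).
Arguments bk : clear implicits.
Hypotheses (hMk : solset Y A f = \bigcup_k Mk k)
  (hepsk : forall k, (ereal_sup [set e | exists2 x, Mk k x &
       e = dist_to x (aff_sp (ubar k) (fspan (bk k)))] <= (epsk k)%:E)%E)
  (hmu : 1 <= mu) (hadm_eps : forall k, epsk k <= eps)
  (hadm_mu : forall k, (mu_ratio P (fspan (bk k)) <= mu%:E)%E).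
Variables (u eta : V) (eps_model eps_noise : R).
Hypotheses (hu : (dist_to u (solset Y A f) <= eps_model%:E)%E)
  (heta : fspan bW eta) (hetan : `|eta| <= eps_noise).
Local Notation w := (P u + eta).
Local Notation Vw := (aff_sp (P u + eta) (orth_compl ip (fspan bW))).
Local Notation rho := (mu * (eps + eps_noise) + (mu + 1) * eps_model).
Variable ustar : 'I_K -> V.
Hypothesis hustar : forall k, Vw (ustar k) /\ forall v, Vw v ->
  (dist_to (ustar k) (aff_sp (ubar k) (fspan (bk k)))
   <= dist_to v (aff_sp (ubar k) (fspan (bk k))))%E.

Lemma eps_model_ge0 : 0 <= eps_model.
Proof. by have := le_trans (dist_ge0 _ _) hu; rewrite lee_fin. Qed.

(* Some PBDW estimator is within rho (up to slack) of a solution: take a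
   solution ub near u, a model Mj containing it and a in Vj near ub. *)
Lemma estimator_near_solution dl : 0 < dl ->
  exists j y ub, [/\ Y y, A y ub = f y & `|ustar j - ub| <= rho + 2 * mu * dl].
Proof.
move=> dl0; have [ub Mub hub] := dist_approx hu dl0.
have := Mub; rewrite hMk => -[j _ Mjub]; case: Mub => y Yy Aub.
have hdj : (dist_to ub (aff_sp (ubar j) (fspan (bk j))) <= eps%:E)%E.
  apply: le_trans (_ : _ <= (epsk j)%:E)%E _; last by rewrite lee_fin.
  by apply: le_trans (hepsk j); apply: ereal_sup_ubound; exists ub.
have [a Va hua] := dist_approx hdj dl0.
have Ww : fspan bW w by apply: fspanD => //; apply: (proj_in hP).
have err := pbdw_error_bound hip hP hmu (fun e Ee => mu_ratio_bound (hadm_mu j) hmu Ee)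
  Ww ub (hustar j).1 (hustar j).2 Va.
have data : `|w - P ub| <= eps_model + dl + eps_noise.
  rewrite addrAC -(projB hip hP); apply: le_trans (ler_normD _ _) _; apply: lerD => //.
  by apply: le_trans (norm_proj_le hip hP _) _; apply: ltW.
exists j, y, ub; split => //; apply: le_trans err _; rewrite distrC.
have sum : `|ub - a| + `|w - P ub| <= eps + eps_model + eps_noise + 2 * dl.
  by have := ltW hua; lra.
apply: le_trans (ler_wpM2l (le_trans ler01 hmu) sum) _.
have := eps_model_ge0; nra.
Qed.

Lemma selection_residual_bound kstar y0 :
  (forall j, (surrogate Y A f (ustar kstar) <= surrogate Y A f (ustar j))%E) ->
  (forall y, Y y -> residual A f (ustar kstar) y0 <= residual A f (ustar kstar) y) ->
  residual A f (ustar kstar) y0 <= Rc * rho.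
Proof.
move=> hkstar hy0; apply/ler_addgt0Pr => e e0.
have k0 : 0 < 2 * mu * Rc by rewrite !mulr_gt0 // (lt_le_trans ltr01 hmu).
have [j [y [ub [Yy Aub near]]]] := estimator_near_solution (divr_gt0 e0 k0).
apply: le_trans (surrogate_selection_le hkstar hy0 j Yy) _.
apply: le_trans (residual_le_error (hAlin Yy) _ (hAbd Yy) Aub) _.
apply: le_trans (ler_wpM2l (ltW hRc) near) _.
have -> : Rc * (rho + 2 * mu * (e / (2 * mu * Rc))) = Rc * rho + e.
  by field; rewrite !gt_eqF // (lt_le_trans ltr01 hmu).
by [].
Qed.

End Selection.

Unset Implicit Arguments.
Theorem mainTheorem9
  (R : realType) (V Zd : completeNormedModType R)
  (ipV : V -> V -> R) (ipZ : Zd -> Zd -> R)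
  (hipV : is_inner_product ipV) (hipZ : is_inner_product ipZ)
  (d : nat) (Y : set 'rV[R]_d) (hY : compact Y)
  (A : 'rV[R]_d -> V -> Zd) (f : 'rV[R]_d -> Zd) (r Rc : R)
  (hr : 0 < r) (hrR : r <= Rc)
  (hAlin : forall y, Y y -> forall (a : R) (x z : V), A y (a *: x + z) = a *: A y x + A y z)
  (hAbd : forall y, Y y -> forall v, `|A y v| <= Rc * `|v|)
  (hAinv : forall y, Y y -> exists B : Zd -> V,
      [/\ cancel (A y) B, cancel B (A y) & forall z, `|B z| <= r^-1 * `|z|])
  (hAcont : forall y0, Y y0 -> forall e : R, 0 < e -> exists2 del : R, 0 < del &
      forall y, Y y -> `|y - y0| < del -> forall v, `|A y v - A y0 v| <= e * `|v|)
  (hfcont : {within Y, continuous f})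
  (m : nat) (bW : 'I_m -> V) (hbW : lin_indep bW)
  (P : V -> V) (hP : is_orth_proj ipV (fspan bW) P)
  (K : nat) (Mk : 'I_K -> set V) (hMk : solset Y A f = \bigcup_k Mk k)
  (ubar : 'I_K -> V) (nk : 'I_K -> nat) (hnk : forall k, (nk k <= m)%N)
  (bk : forall k : 'I_K, 'I_(nk k) -> V)
  (epsk : 'I_K -> R)
  (hepsk : forall k, (ereal_sup [set e | exists2 x, Mk k x & e = dist_to x (aff_sp (ubar k) (fspan (bk k)))]
                       <= (epsk k)%:E)%E)
  (eps mu : R) (heps : 0 < eps) (hmu : 1 <= mu)
  (hadm_eps : forall k, epsk k <= eps)
  (hadm_mu : forall k, (mu_ratio P (fspan (bk k)) <= mu%:E)%E)
  (u : V) (eps_model : R) (hu : (dist_to u (solset Y A f) <= eps_model%:E)%E)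
  (eta : V) (eps_noise : R) (heta : fspan bW eta) (hetan : `|eta| <= eps_noise)
  (ustar_k : 'I_K -> V)
  (hustar : forall k,
      aff_sp (P u + eta) (orth_compl ipV (fspan bW)) (ustar_k k) /\
      forall v, aff_sp (P u + eta) (orth_compl ipV (fspan bW)) v ->
        (dist_to (ustar_k k) (aff_sp (ubar k) (fspan (bk k)))
         <= dist_to v (aff_sp (ubar k) (fspan (bk k))))%E)
  (kstar : 'I_K)
  (hkstar : forall j, (surrogate Y A f (ustar_k kstar) <= surrogate Y A f (ustar_k j))%E)
  (ys : nat -> 'rV[R]_d) (us : nat -> V)
  (hu0 : us 0%N = ustar_k kstar)
  (hy0 : Y (ys 0%N) /\
         forall y, Y y -> residual A f (ustar_k kstar) (ys 0%N) <= residual A f (ustar_k kstar) y)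
  (hyS : forall k, Y (ys k.+1) /\
         forall y, Y y -> residual A f (us k) (ys k.+1) <= residual A f (us k) y)
  (huS : forall k, aff_sp (P u + eta) (orth_compl ipV (fspan bW)) (us k.+1) /\
         forall v, aff_sp (P u + eta) (orth_compl ipV (fspan bW)) v ->
           residual A f (us k.+1) (ys k.+1) <= residual A f v (ys k.+1)) :
  (forall k, residual A f (us k.+1) (ys k.+1) <= residual A f (us k) (ys k)) /\
  (forall k, ((`|u - us k|)%:E <=
     delta_sig ipV (fspan bW) (solset Y A f)
       (Rc / r * (mu * (eps + eps_noise) + (mu + 1) * eps_model)) + eps_noise%:E)%E).
Proof.
have Yys k : Y (ys k) by case: k => [|k]; [exact: hy0.1 | exact: (hyS k).1].
have inVw k : aff_sp (P u + eta) (orth_compl ipV (fspan bW)) (us k).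
  by case: k => [|k]; [rewrite hu0; exact: (hustar kstar).1 | exact: (huS k).1].
have mono := alternating_min_nonincreasing inVw Yys (fun k => (hyS k).2) (fun k => (huS k).2).
split => // k.
have Rc0 : 0 < Rc by apply: lt_le_trans hrR.
have em0 : 0 <= eps_model by have := le_trans (dist_ge0 _ _) hu; rewrite lee_fin.
have en0 : 0 <= eps_noise by apply: le_trans hetan.
set rho := mu * (eps + eps_noise) + (mu + 1) * eps_model.
have kappa1 : 1 <= Rc / r by rewrite ler_pdivlMr // mul1r.
have rho_ge : eps_model + eps_noise <= rho by rewrite /rho; nra.
have rho_le : rho <= Rc / r * rho by rewrite ler_peMl //; lra.
have res_k : residual A f (us k) (ys k) <= Rc * rho.
  apply: le_trans ((nonincreasing_seqP _).1 mono 0%N k (leq0n k)) _.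
  rewrite hu0; apply: (selection_residual_bound hipV Rc0 hAlin hAbd hP hMk hepsk hmu
    hadm_eps hadm_mu hu heta hetan hustar hkstar hy0.2).
have Mu : Msig (solset Y A f) (Rc / r * rho) (u + eta).
  apply: le_trans (dist_shift_le hu hetan) _; rewrite lee_fin; lra.
have Mus : Msig (solset Y A f) (Rc / r * rho) (us k).
  apply: le_trans (dist_solset_le_residual f (hAlin _ (Yys k)) (us k) (Yys k) (hAinv _ (Yys k))) _.
  have -> : Rc / r * rho = r^-1 * (Rc * rho) by rewrite mulrAC mulrC.
  by rewrite lee_fin ler_wpM2l // invr_ge0 ltW.
have orth : orth_compl ipV (fspan bW) (u + eta - us k).
  apply: (fiber_diff_orth hipV hP _ _ (inVw k)).
    by apply: fspanD => //; apply: (proj_in hP).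
  by rewrite (projD hipV hP) (proj_id hipV hP heta).
apply: le_trans (leeD2r (eps_noise%:E) (delta_sig_ub Mu Mus orth)); rewrite -EFinD lee_fin.
have -> : u - us k = (u + eta - us k) - eta by rewrite addrAC addrK.
by apply: le_trans (ler_normB _ _) _; apply: lerD.
Qed.
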